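(* Let $x=(x_0x_1)^{-1}$ and $y=x_2xx_2^{-1}$. For every integer $n\ge1$, $x^n$ has one of the forms $M_0([28,235,129],[29,211,263],\dots)$, $M_0([28,235,129],[46,138,451],\dots)$, $M_{2^r-1}([51,89,196],[0,0,0],\dots)$ for some odd $r\ge1$, or $M_{2^r-1}([28,235,129],[0,0,0],\dots)$ for some even $r\ge2$; and for every $n\ge1$, $y^n$ has one of the forms $M_0([28,235,129],[58,3,445],\dots)$, $M_0([28,235,129],[9,90,377],\dots)$, $M_{2^r-1}([51,89,196],[0,157,106],\dots)$ for some odd $r\ge1$, or $M_{2^r-1}([28,235,129],[39,208,186],\dots)$ for some even $r\ge2$.
   Context: Consider infinite upper unitriangular block matrices $X=(X_{r,s})_{r,s\ge1}$ whose entries are $3\times3$ matrices over $\mathbb F_2$, with $X_{r,r}=I$, $X_{r,s}=0$ for $s<r$, and whose upper diagonals are $3$-periodic: for each $j\ge1$ there are $a_{j1},a_{j2},a_{j3}\in M(3,\mathbb F_2)$ with $X_{r,r+j}=a_{j,i}$, where $i\in\{1,2,3\}$, $i\equiv r\pmod 3$; $a_j=[a_{j1},a_{j2},a_{j3}]$ is the $j$-th upper diagonal. For $l\ge0$, $M_l(c_1,c_2,\dots)$ denotes such a matrix whose first $l$ upper diagonals are zero and whose $(l+1)$-st, $(l+2)$-nd, $\dots$ upper diagonals are $c_1,c_2,\dots$; diagonals hidden in ''$\dots$'' are unspecified, while a matrix written $M_0(c_1,\dots,c_m)$ without dots has all further diagonals zero. A matrix $u=(u_{pq})\in M(3,\mathbb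 F_2)$ is encoded by the integer $256u_{11}+128u_{12}+64u_{13}+32u_{21}+16u_{22}+8u_{23}+4u_{31}+2u_{32}+u_{33}$, and a diagonal by the triple of integers of its three blocks. The elements are $x_0=M_0([11,11,11],[17,17,17],[26,26,26],[11,11,0],[17,0,0])$, $x_1=M_0([23,224,138],[59,136,495],[26,488,227],[23,224,0],[59,0,0])$, $x_2=M_0([46,68,217],[12,194,363],[26,326,77],[46,68,0],[12,0,0])$. *)

From mathcomp Require Import all_boot all_order all_algebra.
Set Implicit Arguments. Unset Strict Implicit. Unset Printing Implicit Defensive.
Import GRing.Theory.
Local Open Scope ring_scope.

Notation blk := 'M['F_2]_3.

(* A 3-periodic upper unitriangular block matrix X = (X_{r,s}) is stored by
   its diagonals: [D j i] is the block a_{j,i+1} (i : 'I_3 is 0-based), i.e.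
   X_{r,r+j} = D j i whenever r = i+1 (mod 3).  Diagonal 0 is the identity. *)
Definition BM := nat -> 'I_3 -> blk.

(* class of row r+k when row r has class i *)
Definition shift3 (i : 'I_3) (k : nat) : 'I_3 := inord ((i + k) %% 3).

Definition bm_one : BM := fun j _ => if j == 0%N then 1%:M else 0.

Definition bm_mul (X Y : BM) : BM :=
  fun j i => \sum_(k < j.+1) X k i *m Y (j - k)%N (shift3 i k).

Fixpoint bm_pow (X : BM) (n : nat) : BM :=
  match n with 0 => bm_one | n'.+1 => bm_mul X (bm_pow X n') end.

(* Inverse: the unique Z with Z_0 = I and (XZ)_j = 0 for j >= 1, obtained by
   solving the triangular system diagonal by diagonal:
   Z_{j,i} = - sum_{k=1}^{j} X_{k,i} Z_{j-k, i+k}.  [bm_inv_aux n] is correct on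
   diagonals j <= n. *)
Fixpoint bm_inv_aux (X : BM) (n : nat) : BM :=
  match n with
  | 0 => bm_one
  | n'.+1 => let Z := bm_inv_aux X n' in
      fun j i => if j == 0%N then 1%:M
                 else - \sum_(k < j) X k.+1 i *m Z (j - k.+1)%N (shift3 i k.+1)
  end.
Definition bm_inv (X : BM) : BM := fun j i => bm_inv_aux X j j i.

(* integer encoding: 256u11+128u12+64u13+32u21+16u22+8u23+4u31+2u32+u33 *)
Definition code_mx (c : nat) : blk :=
  \matrix_(p < 3, q < 3) (odd (c %/ 2 ^ (8 - (3 * p + q))))%:R.

Definition code_diag (t : nat * nat * nat) : 'I_3 -> blk :=
  fun i => let: (a, b, c) := t in
           code_mx (if i == 0 :> nat then a else if i == 1 :> nat then b else c).

Definition M0fin (ds : seq (nat * nat * nat)) : BM :=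
  fun j i => if j == 0%N then 1%:M
             else if (j <= size ds)%N then code_diag (nth (0, 0, 0)%N ds j.-1) i
             else 0.

Definition has_form (X : BM) (l : nat) (c1 c2 : nat * nat * nat) : Prop :=
  (forall j i, (1 <= j <= l)%N -> X j i = 0) /\
  (forall i, X l.+1 i = code_diag c1 i) /\
  (forall i, X l.+2 i = code_diag c2 i).

Definition x0 : BM := M0fin [:: (11,11,11); (17,17,17); (26,26,26); (11,11,0); (17,0,0)]%N.
Definition x1 : BM := M0fin [:: (23,224,138); (59,136,495); (26,488,227); (23,224,0); (59,0,0)]%N.
Definition x2 : BM := M0fin [:: (46,68,217); (12,194,363); (26,326,77); (46,68,0); (12,0,0)]%N.

(* Both x and y are unitriangular with first diagonal a = [28,235,129], and
   over F_2 the blocks c_i := a_i a_{i+1} satisfy c_i c_{i+2} = a_i (indices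
   mod 3).  In characteristic 2, for m odd the first diagonal of x^m is a and
   its second is m b + binomial(m,2) c, i.e. b or b + c.  Squaring a matrix of
   the form M_l(A,B) gives the form M_{2l+1}(A_i A_{i+l+1}, A_i B_{i+l+1} +
   B_i A_{i+l+2}); as 2^r = (-1)^r mod 3, the 2^r-th powers of x^m therefore
   have leading diagonal c for r odd and a for r even, with second diagonals
   alternating between two fixed values.  Writing n = 2^r m with m odd covers
   every n; the finitely many block identities over F_2 are decided by
   computation. *)

From mathcomp Require Import all_boot all_order all_algebra.
From mathcomp Require Import zify.
From Stdlib Require Import FunctionalExtensionality.
Set Implicit Arguments. Unset Strict Implicit. Unset Printing Implicit Defensive.
Import GRing.Theory.
Local Open Scope ring_scope.

Lemma shift3_val (i : 'I_3) k : shift3 i k = ((i + k) %% 3)%N :> nat.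
Proof. by rewrite /shift3 inordK // ltn_pmod. Qed.

Lemma shift3_0 (i : 'I_3) : shift3 i 0 = i.
Proof. by apply: ord_inj; rewrite shift3_val addn0 modn_small. Qed.

Lemma shift3_add (i : 'I_3) a b : shift3 (shift3 i a) b = shift3 i (a + b).
Proof. by apply: ord_inj; rewrite !shift3_val modnDml addnA. Qed.

Lemma shift3_mod (i : 'I_3) k : shift3 i (k %% 3) = shift3 i k.
Proof. by apply: ord_inj; rewrite !shift3_val modnDmr. Qed.

Lemma bm_mulA X Y Z : bm_mul (bm_mul X Y) Z = bm_mul X (bm_mul Y Z).
Proof.
apply: functional_extensionality => j; apply: functional_extensionality => i.
rewrite /bm_mul.
under eq_bigr do rewrite mulmx_suml.
under [RHS]eq_bigr do rewrite mulmx_sumr.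
pose G (l k : nat) := X l i *m Y (k - l)%N (shift3 i l) *m Z (j - k)%N (shift3 i k).
transitivity (\sum_(k < j.+1) \sum_(l < j.+1) (if (l <= k)%N then G l k else 0)).
  apply: eq_bigr => k _.
  by rewrite (big_ord_widen j.+1 (fun l : nat => G l k)) ?big_mkcond ?ltnS ?leq_ord.
rewrite exchange_big /=; apply: eq_bigr => l _.
rewrite -big_mkcond /= -(big_geq_mkord l j.+1 xpredT) -{1}(add0n l) big_addn.
rewrite big_mkord subSn ?leq_ord //; apply: eq_bigr => k _.
rewrite /G addnK mulmxA shift3_add addnC; congr (_ *m Z _ _).
by rewrite subnDA.
Qed.

Lemma bm_mul1 X : bm_mul bm_one X = X.
Proof.
apply: functional_extensionality => j; apply: functional_extensionality => i.
rewrite /bm_mul big_ord_recl /= subn0 shift3_0 mul1mx big1 ?addr0 // => k _.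
by rewrite mul0mx.
Qed.

Lemma bm_powS X n : bm_pow X n.+1 = bm_mul X (bm_pow X n).
Proof. by []. Qed.

Lemma bm_powD X a b : bm_pow X (a + b) = bm_mul (bm_pow X a) (bm_pow X b).
Proof. by elim: a => [|a IH] /=; rewrite ?bm_mul1 // IH bm_mulA. Qed.

Definition bm_sq (X : BM) : BM := bm_mul X X.

Lemma bm_pow_expn2 X r m : bm_pow X (2 ^ r * m) = iter r bm_sq (bm_pow X m).
Proof.
elim: r => [|r IH]; first by rewrite mul1n.
by rewrite iterS -IH /bm_sq -bm_powD expnS -mulnA mul2n -addnn.
Qed.

Definition unitriangular (X : BM) := forall i, X 0%N i = 1%:M.

Lemma unitriangular_bm_mul X Y : unitriangular X -> unitriangular Y ->
  unitriangular (bm_mul X Y).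
Proof. by move=> X0 Y0 i; rewrite /bm_mul big_ord1 /= X0 Y0 mul1mx. Qed.

Lemma bm_mul_diag1 X Y : unitriangular X -> unitriangular Y -> forall i,
  bm_mul X Y 1%N i = X 1%N i + Y 1%N i.
Proof.
move=> X0 Y0 i; rewrite /bm_mul !big_ord_recr big_ord0 /= add0r shift3_0 subn0 subnn.
by rewrite X0 Y0 mul1mx mulmx1 addrC.
Qed.

Lemma bm_mul_diag2 X Y : unitriangular X -> unitriangular Y -> forall i,
  bm_mul X Y 2%N i = Y 2%N i + X 1%N i *m Y 1%N (shift3 i 1) + X 2%N i.
Proof.
move=> X0 Y0 i; rewrite /bm_mul !big_ord_recr big_ord0 /= add0r shift3_0 subn0 subnn.
by rewrite -[(2 - 1)%N]/1%N X0 Y0 mul1mx mulmx1.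
Qed.

Lemma unitriangular_bm_inv X : unitriangular (bm_inv X).
Proof. by move=> i. Qed.

Lemma bm_inv_diag1 X i : bm_inv X 1%N i = - X 1%N i.
Proof. by rewrite /bm_inv /= big_ord_recr big_ord0 /= add0r mulmx1. Qed.

Lemma bm_inv_diag2 X i :
  bm_inv X 2%N i = X 1%N i *m X 1%N (shift3 i 1) - X 2%N i.
Proof.
rewrite /bm_inv /= !big_ord_recr big_ord0 /= add0r subnn -[(2 - 1)%N]/1%N /=.
by rewrite big_ord0 add0r /bm_one /= !mulmx1 mulmxN opprD opprK.
Qed.

Section UnitriangularPowers.
Variable X : BM.
Hypothesis X0 : unitriangular X.

Lemma unitriangular_bm_pow n : unitriangular (bm_pow X n).
Proof. by elim: n => [|n IH] //=; apply: unitriangular_bm_mul. Qed.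

Lemma bm_pow_diag1 n i : bm_pow X n 1%N i = X 1%N i *+ n.
Proof.
elim: n => [|n IH]; first by rewrite mulr0n.
by rewrite bm_powS (bm_mul_diag1 X0 (unitriangular_bm_pow n)) IH mulrS.
Qed.

Lemma bm_pow_diag2 n i :
  bm_pow X n 2%N i = X 2%N i *+ n + (X 1%N i *m X 1%N (shift3 i 1)) *+ 'C(n, 2).
Proof.
elim: n => [|n IH] in i *; first by rewrite !mulr0n addr0.
rewrite bm_powS (bm_mul_diag2 X0 (unitriangular_bm_pow n)) IH bm_pow_diag1 binS bin1.
rewrite mulmxE mulrnAr -mulmxE mulrSr mulrnDr.
by rewrite -!addrA; congr (_ + _); rewrite [RHS]addrC -addrA.
Qed.

End UnitriangularPowers.

Lemma pchar_F2mx n : 2 \in [pchar 'M['F_2]_n.+1].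
Proof. exact: (rmorph_pchar (scalar_mx : 'F_2 -> 'M_n.+1) (pchar_Fp _)). Qed.

Lemma mulrn_odd_pchar2 (R : nzRingType) : 2 \in [pchar R] ->
  forall (x : R) m, x *+ m = x *+ odd m.
Proof.
move=> pcharR2 x m; rewrite -{1}(odd_double_half m) mulrnDr -mul2n mulrnA.
by rewrite mulr2n addrr_pchar2 // mul0rn addr0.
Qed.

Lemma blk_addxx (A : blk) : A + A = 0.
Proof. exact: (addrr_pchar2 (pchar_F2mx 2)). Qed.

Lemma blk_mulrn_odd (A : blk) m : A *+ m = A *+ odd m.
Proof. exact: (mulrn_odd_pchar2 (pchar_F2mx 2)). Qed.

Definition form_at (Y : BM) (l : nat) (A B : 'I_3 -> blk) : Prop :=
  (forall j i, (1 <= j <= l)%N -> Y j i = 0) /\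
  (forall i, Y l.+1 i = A i) /\ (forall i, Y l.+2 i = B i).

Lemma eq_form_at Y l A B A' B' : A =1 A' -> B =1 B' ->
  form_at Y l A B -> form_at Y l A' B'.
Proof. by move=> eA eB [Y0 [YA YB]]; split; [|split] => // i; rewrite -?eA -?eB. Qed.

Lemma bm_sq_diagS Y : unitriangular Y -> forall j i,
  bm_sq Y j.+1 i = \sum_(k < j) Y k.+1 i *m Y (j - k)%N (shift3 i k.+1).
Proof.
move=> Y0 j i; rewrite /bm_sq /bm_mul big_ord_recl big_ord_recr /= subn0 subnn.
rewrite !Y0 shift3_0 mul1mx mulmx1 addrA [Y j.+1 i + _]addrC -addrA blk_addxx addr0.
by apply: eq_bigr => k _; rewrite /bump /=.
Qed.

Section SquareForm.
Variables (Y : BM) (l : nat) (A B : 'I_3 -> blk).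
Hypotheses (Y0 : unitriangular Y) (YlAB : form_at Y l A B).

Lemma form_at_term0 j (k : 'I_j) i : (k < l)%N || (j - k <= l)%N ->
  Y k.+1 i *m Y (j - k)%N (shift3 i k.+1) = 0.
Proof.
have [Yz _] := YlAB; have := ltn_ord k.
case: (ltnP k l) => [kl _ _ | lk kj /= jkl]; first by rewrite Yz ?mul0mx //; lia.
by rewrite (Yz (j - k)%N) ?mulmx0 //; lia.
Qed.

Lemma bm_sq_form : form_at (bm_sq Y) (l + l).+1
  (fun i => A i *m A (shift3 i l.+1))
  (fun i => A i *m B (shift3 i l.+1) + B i *m A (shift3 i l.+2)).
Proof.
have [_ [YA YB]] := YlAB.
split; [|split] => [[|j] i // /andP [_ jl] | i | i]; rewrite bm_sq_diagS //.
- by rewrite big1 // => k _; apply: form_at_term0; lia.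
- have kl : (l < (l + l).+1)%N by lia.
  rewrite (bigD1 (Ordinal kl)) //= big1 ?addr0.
    by rewrite (_ : (l + l).+1 - l = l.+1)%N ?YA //; lia.
  move=> k; rewrite -val_eqE /= => nkl; apply: form_at_term0; lia.
- have kl : (l < (l + l).+2)%N by lia.
  have kl1 : (l.+1 < (l + l).+2)%N by lia.
  rewrite (bigD1 (Ordinal kl)) //= (bigD1 (Ordinal kl1)) /=; last by rewrite -val_eqE /=; lia.
  rewrite big1 ?addr0.
    rewrite (_ : (l + l).+2 - l = l.+2)%N; last by lia.
    by rewrite (_ : (l + l).+2 - l.+1 = l.+1)%N ?YA ?YB //; lia.
  move=> k; rewrite -!val_eqE /= => nkl; apply: form_at_term0; lia.
Qed.
End SquareForm.

Lemma expn2_mod3 r : (2 ^ r %% 3 = if odd r then 2 else 1)%N.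
Proof. by elim: r => [|r IH] //; rewrite expnS -modnMmr IH /=; case: (odd r). Qed.

Lemma shift3_pow2 (i : 'I_3) r :
  shift3 i (2 ^ r - 1).+1 = shift3 i (if odd r then 2 else 1).
Proof.
rewrite (_ : (2 ^ r - 1).+1 = 2 ^ r)%N; last by have := expn_gt0 2 r; lia.
by rewrite -shift3_mod expn2_mod3.
Qed.

Lemma shift3_pow2S (i : 'I_3) r :
  shift3 i (2 ^ r - 1).+2 = if odd r then i else shift3 i 2.
Proof.
rewrite (_ : (2 ^ r - 1).+2 = 2 ^ r + 1)%N; last by have := expn_gt0 2 r; lia.
by rewrite -shift3_mod -modnDml expn2_mod3; case: (odd r); rewrite ?shift3_0.
Qed.

Lemma odd_pow2_decomp n : (0 < n)%N -> exists r m, odd m /\ n = (2 ^ r * m)%N.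
Proof.
elim: n {-2}n (leqnn n) => [|N IH] n Nn n0; first by lia.
case on: (odd n); first by exists 0%N, n; rewrite mul1n.
have n2 := odd_double_half n; rewrite on add0n in n2.
have [||r [m [om n2rm]]] := IH n./2; [lia | lia |].
by exists r.+1, m; rewrite -n2 n2rm expnS -mulnA mul2n.
Qed.

Section PowerForms.
Variables (X : BM) (a b b' c Bo Be : 'I_3 -> blk).
Hypotheses (X0 : unitriangular X) (Xa : forall i, X 1%N i = a i)
  (Xb : forall i, X 2%N i = b i).
Hypothesis a2_c : forall i, a i *m a (shift3 i 1) = c i.
Hypothesis bc_b' : forall i, b i + c i = b' i.
Hypothesis c2_a : forall i, c i *m c (shift3 i 2) = a i.
Hypothesis ab_Bo : forall i, a i *m b (shift3 i 1) + b i *m a (shift3 i 2) = Bo i.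
Hypothesis aBe_Bo : forall i, a i *m Be (shift3 i 1) + Be i *m a (shift3 i 2) = Bo i.
Hypothesis cBo_Be : forall i, c i *m Bo (shift3 i 2) + Bo i *m c i = Be i.

Definition odd_pow_diag2 m i := if odd 'C(m, 2) then b i + c i else b i.

Lemma odd_pow_form m : odd m -> form_at (bm_pow X m) 0 a (odd_pow_diag2 m).
Proof.
move=> om; split; [by case=> [|[]] | split] => i.
  by rewrite bm_pow_diag1 // blk_mulrn_odd om Xa.
rewrite bm_pow_diag2 // Xb Xa Xa a2_c [b i *+ _]blk_mulrn_odd om.
by rewrite [c i *+ _]blk_mulrn_odd /odd_pow_diag2; case: (odd _); rewrite ?addr0.
Qed.

Lemma odd_pow_diag2_Bo m i :
  a i *m odd_pow_diag2 m (shift3 i 1) + odd_pow_diag2 m i *m a (shift3 i 2) = Bo i.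
Proof.
have ac_ca : a i *m c (shift3 i 1) + c i *m a (shift3 i 2) = 0.
  by rewrite -!a2_c shift3_add mulmxA blk_addxx.
rewrite /odd_pow_diag2; case: (odd _) => //.
by rewrite mulmxDr mulmxDl addrACA ab_Bo ac_ca addr0.
Qed.

Lemma iter_sq_form Z B0 r : unitriangular Z -> form_at Z 0 a B0 ->
  (forall i, a i *m B0 (shift3 i 1) + B0 i *m a (shift3 i 2) = Bo i) -> (0 < r)%N ->
  form_at (iter r bm_sq Z) (2 ^ r - 1)
    (if odd r then c else a) (if odd r then Bo else Be).
Proof.
move=> Z0 ZaB0 aB0_Bo; elim: r => [|[|r] IH] // _.
  by apply: eq_form_at (bm_sq_form Z0 ZaB0) => i /=.
have Zr0 : unitriangular (iter r.+1 bm_sq Z).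
  by elim: (r.+1) => [|k IHk] //=; apply: unitriangular_bm_mul.
rewrite iterS (_ : 2 ^ r.+2 - 1 = (2 ^ r.+1 - 1 + (2 ^ r.+1 - 1)).+1)%N; last first.
  by rewrite (expnS 2 r.+1); have := expn_gt0 2 r.+1; lia.
apply: eq_form_at (bm_sq_form Zr0 (IH isT)) => i;
  rewrite shift3_pow2 ?shift3_pow2S /=; by case: (odd r).
Qed.

Lemma bm_pow_forms n : (0 < n)%N ->
  form_at (bm_pow X n) 0 a b \/ form_at (bm_pow X n) 0 a b' \/
  (exists r, odd r /\ form_at (bm_pow X n) (2 ^ r - 1) c Bo) \/
  (exists r, ~~ odd r /\ (2 <= r)%N /\ form_at (bm_pow X n) (2 ^ r - 1) a Be).
Proof.
move=> /odd_pow2_decomp [r [m [om ->]]].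
have Xm := odd_pow_form om; rewrite bm_pow_expn2.
case: r => [|r].
  rewrite /odd_pow_diag2 in Xm; case: (odd _) Xm => Xm; [right; left | by left].
  exact: eq_form_at Xm.
have := iter_sq_form (unitriangular_bm_pow X0 m) Xm (odd_pow_diag2_Bo m) (ltn0Sn r).
case odd_r: (odd r.+1) => Xrm; right; right; [left | right]; exists r.+1 => //.
by rewrite odd_r; split => //; split => //; case: r odd_r {Xrm}.
Qed.

End PowerForms.

Definition tbl_mx (f : nat -> nat -> bool) : blk := \matrix_(p, q) (f p q)%:R.

Definition tbl_mul (f g : nat -> nat -> bool) p q :=
  (f p 0 && g 0 q) (+) (f p 1 && g 1 q) (+) (f p 2 && g 2 q).

Lemma F2_addb (u v : bool) : u%:R + v%:R = (u (+) v)%:R :> 'F_2.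
Proof. by case: u; case: v => //; apply/eqP. Qed.

Lemma F2_mulb (u v : bool) : u%:R * v%:R = (u && v)%:R :> 'F_2.
Proof. by case: u; case: v; rewrite ?mulr0 ?mulr1. Qed.

Lemma tbl_mxM f g : tbl_mx f *m tbl_mx g = tbl_mx (tbl_mul f g).
Proof.
apply/matrixP => p q; rewrite !mxE !big_ord_recr big_ord0 /= add0r !mxE.
by rewrite !F2_mulb !F2_addb.
Qed.

Lemma tbl_mxD f g : tbl_mx f + tbl_mx g = tbl_mx (fun p q => f p q (+) g p q).
Proof. by apply/matrixP => p q; rewrite !mxE F2_addb. Qed.

Lemma tbl_mxN f : - tbl_mx f = tbl_mx f.
Proof. exact: (oppr_pchar2 (pchar_F2mx 2)). Qed.

Lemma code_mxE c : code_mx c = tbl_mx (fun p q => odd (c %/ 2 ^ (8 - (3 * p + q)))).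
Proof. by apply/matrixP => p q; rewrite !mxE. Qed.

Lemma eq_tbl_mx f g :
  all (fun p => all (fun q => f p q == g p q) (iota 0 3)) (iota 0 3) ->
  tbl_mx f = tbl_mx g.
Proof.
move=> /allP fg; apply/matrixP => p q; rewrite !mxE.
move: (fg p); rewrite mem_iota ltn_ord => /(_ isT) /allP /(_ q).
by rewrite mem_iota ltn_ord => /(_ isT) /eqP ->.
Qed.

Ltac blk_compute :=
  rewrite /x0 /x1 /x2 /M0fin /code_diag ?shift3_val /= ?code_mxE ?(tbl_mxM, tbl_mxD, tbl_mxN);
  apply: eq_tbl_mx; vm_compute; reflexivity.

Ltac case_ord3 i := case: i => [[|[|[|?]]] ?] //.

Lemma unitriangular_M0fin ds : unitriangular (M0fin ds).
Proof. by move=> i. Qed.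

Definition x := bm_inv (bm_mul x0 x1).
Definition y := bm_mul (bm_mul x2 x) (bm_inv x2).

Lemma x_unitriangular : unitriangular x.
Proof. exact: unitriangular_bm_inv. Qed.

Lemma x_diag1 i : x 1%N i = code_diag (28, 235, 129)%N i.
Proof.
rewrite /x bm_inv_diag1 bm_mul_diag1 ?unitriangular_M0fin //.
case_ord3 i; blk_compute.
Qed.

Lemma x_diag2 i : x 2%N i = code_diag (29, 211, 263)%N i.
Proof.
rewrite /x bm_inv_diag2 !bm_mul_diag1 ?bm_mul_diag2 ?unitriangular_M0fin //.
case_ord3 i; blk_compute.
Qed.

Lemma x2x_unitriangular : unitriangular (bm_mul x2 x).
Proof. exact: unitriangular_bm_mul (unitriangular_M0fin _) x_unitriangular. Qed.

Lemma y_unitriangular : unitriangular y.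
Proof. exact: unitriangular_bm_mul x2x_unitriangular (unitriangular_bm_inv x2). Qed.

Lemma y_diag1 i : y 1%N i = code_diag (28, 235, 129)%N i.
Proof.
rewrite /y (bm_mul_diag1 x2x_unitriangular (unitriangular_bm_inv x2)).
rewrite (bm_mul_diag1 (unitriangular_M0fin _) x_unitriangular) bm_inv_diag1 x_diag1.
case_ord3 i; blk_compute.
Qed.

Lemma y_diag2 i : y 2%N i = code_diag (58, 3, 445)%N i.
Proof.
have x20 : unitriangular x2 := unitriangular_M0fin _.
rewrite /y (bm_mul_diag2 x2x_unitriangular (unitriangular_bm_inv x2)).
rewrite (bm_mul_diag1 x20 x_unitriangular) (bm_mul_diag2 x20 x_unitriangular).
rewrite bm_inv_diag1 bm_inv_diag2 !x_diag1 x_diag2.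
case_ord3 i; blk_compute.
Qed.

Lemma code_diag0 i : code_diag (0, 0, 0)%N i = 0.
Proof. by apply/matrixP => p q; rewrite /code_diag !if_same !mxE div0n. Qed.

Local Notation a := (code_diag (28, 235, 129)%N).
Local Notation c := (code_diag (51, 89, 196)%N).

Lemma a2_c i : a i *m a (shift3 i 1) = c i.
Proof. case_ord3 i; blk_compute. Qed.

Lemma c2_a i : c i *m c (shift3 i 2) = a i.
Proof. case_ord3 i; blk_compute. Qed.

Lemma x_b_add_c i : code_diag (29, 211, 263)%N i + c i = code_diag (46, 138, 451)%N i.
Proof. case_ord3 i; blk_compute. Qed.

Lemma y_b_add_c i : code_diag (58, 3, 445)%N i + c i = code_diag (9, 90, 377)%N i.
Proof. case_ord3 i; blk_compute. Qed.

Lemma x_ab_Bo i :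
  a i *m code_diag (29, 211, 263)%N (shift3 i 1) +
  code_diag (29, 211, 263)%N i *m a (shift3 i 2) = code_diag (0, 0, 0)%N i.
Proof. case_ord3 i; blk_compute. Qed.

Lemma y_ab_Bo i :
  a i *m code_diag (58, 3, 445)%N (shift3 i 1) +
  code_diag (58, 3, 445)%N i *m a (shift3 i 2) = code_diag (0, 157, 106)%N i.
Proof. case_ord3 i; blk_compute. Qed.

Lemma y_aBe_Bo i :
  a i *m code_diag (39, 208, 186)%N (shift3 i 1) +
  code_diag (39, 208, 186)%N i *m a (shift3 i 2) = code_diag (0, 157, 106)%N i.
Proof. case_ord3 i; blk_compute. Qed.

Lemma y_cBo_Be i :
  c i *m code_diag (0, 157, 106)%N (shift3 i 2) +
  code_diag (0, 157, 106)%N i *m c i = code_diag (39, 208, 186)%N i.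
Proof. case_ord3 i; blk_compute. Qed.

Theorem corollary4p4 :
  let x := bm_inv (bm_mul x0 x1) in
  let y := bm_mul (bm_mul x2 x) (bm_inv x2) in
  (forall n : nat, (1 <= n)%N ->
     has_form (bm_pow x n) 0 (28,235,129)%N (29,211,263)%N \/
     has_form (bm_pow x n) 0 (28,235,129)%N (46,138,451)%N \/
     (exists r : nat, odd r /\ has_form (bm_pow x n) (2 ^ r - 1) (51,89,196)%N (0,0,0)%N) \/
     (exists r : nat, ~~ odd r /\ (2 <= r)%N /\
        has_form (bm_pow x n) (2 ^ r - 1) (28,235,129)%N (0,0,0)%N)) /\
  (forall n : nat, (1 <= n)%N ->
     has_form (bm_pow y n) 0 (28,235,129)%N (58,3,445)%N \/
     has_form (bm_pow y n) 0 (28,235,129)%N (9,90,377)%N \/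
     (exists r : nat, odd r /\ has_form (bm_pow y n) (2 ^ r - 1) (51,89,196)%N (0,157,106)%N) \/
     (exists r : nat, ~~ odd r /\ (2 <= r)%N /\
        has_form (bm_pow y n) (2 ^ r - 1) (28,235,129)%N (39,208,186)%N)).
Proof.
split.
- have zero_sum (A B : blk) i j :
      A *m code_diag (0, 0, 0)%N j + code_diag (0, 0, 0)%N i *m B = code_diag (0, 0, 0)%N i.
    by rewrite !code_diag0 mulmx0 mul0mx addr0.
  exact: bm_pow_forms x_unitriangular x_diag1 x_diag2 a2_c x_b_add_c c2_a
    x_ab_Bo (fun i => zero_sum _ _ i _) (fun i => zero_sum _ _ i _).
- exact: bm_pow_forms y_unitriangular y_diag1 y_diag2 a2_c y_b_add_c c2_a
    y_ab_Bo y_aBe_Bo y_cBo_Be.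
Qed.
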